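(* The sets $G(z^* )$ and $-G(z^* )=\{-u: u\in G(z^* )\}$ are disjoint, and the following three sets coincide: (i) $G(z^* )\cup(-G(z^* ))$; (ii) the orbit of $z^*$ under $\mathrm{Aut}_{\mathbb Z}(L^* )$; (iii) the orbit of $z^*$ under $\mathrm{AAut}_{\mathbb Z}(L^* )=\mathrm{Isom}_{\mathbb Z}(L^* )$.
   Context: $\mathbb F$ is a field of characteristic zero, $\mathfrak{sl}_2$ the Lie algebra of $2\times2$ trace-zero matrices over $\mathbb F$ with trace form $(u,v)=\mathrm{tr}(uv)$. Let $x^*=\begin{pmatrix}1&-1\\1&-1\end{pmatrix}$, $y^*=\begin{pmatrix}0&0\\1&0\end{pmatrix}$, $z^*=\begin{pmatrix}0&-1\\0&0\end{pmatrix}$, $L^*=\mathbb Zx^*\oplus\mathbb Zy^*\oplus\mathbb Zz^*$. $G$ is the subgroup of $\mathrm{Aut}_{\mathbb F}(\mathfrak{sl}_2)$ generated by $\exp(\mathrm{ad}\,x^* ),\exp(\mathrm{ad}\,y^* ),\exp(\mathrm{ad}\,z^* )$. An antiautomorphism is an $\mathbb F$-linear bijection $\phi$ with $\phi([u,v])=[\phi(v),\phi(u)]$; an isometry is an $\mathbb F$-linear bijection preserving the trace form. $\mathrm{Aut}_{\mathbb Z}(L^* )$, $\mathrm{AAut}_{\mathbb Z}(L^* )$, $\mathrm{Isom}_{\mathbb Z}(L^* )$ are respectively the groups of automorphisms, of automorphisms and antiautomorphisms, and of isometries $\varphi$ of $\mathfrak{sl}_2$ with $\varphi(L^* )=L^*$.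 *)

From HB Require Import structures.
From mathcomp Require Import all_boot all_order all_algebra.
Set Implicit Arguments. Unset Strict Implicit. Unset Printing Implicit Defensive.
Import Order.TTheory GRing.Theory Num.Theory.
Local Open Scope ring_scope.

Section SL2.
Variable F : fieldType.

Definition mx2 (a b c d : F) : 'M[F]_2 :=
  \matrix_(i < 2, j < 2)
    if (i == 0 :> nat) then (if (j == 0 :> nat) then a else b)
    else (if (j == 0 :> nat) then c else d).

Definition sl2 (u : 'M[F]_2) : Prop := \tr u = 0.

Definition lie (u v : 'M[F]_2) : 'M[F]_2 := u * v - v * u.
Definition ad (a : 'M[F]_2) (u : 'M[F]_2) : 'M[F]_2 := lie a u.

(* exp(ad a) = sum_k (ad a)^k / k! ; used only for a with ad a nilpotent on
   the 3-dimensional space sl_2, where (ad a)^3 = 0, so the sum stops at k=2. *)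
Definition exp_ad (a : 'M[F]_2) (u : 'M[F]_2) : 'M[F]_2 :=
  \sum_(k < 3) (k`!%:R)^-1 *: iter k (ad a) u.

Definition xs : 'M[F]_2 := mx2 1 (-1) 1 (-1).
Definition ys : 'M[F]_2 := mx2 0 0 1 0.
Definition zs : 'M[F]_2 := mx2 0 (-1) 0 0.

Definition Lstar (u : 'M[F]_2) : Prop :=
  exists a b c : int, u = a%:~R *: xs + b%:~R *: ys + c%:~R *: zs.

Definition mapT := 'M[F]_2 -> 'M[F]_2.

Definition inverse_on_sl2 (g h : 'M[F]_2 -> 'M[F]_2) : Prop :=
  (forall u, sl2 u -> sl2 (h u)) /\
  (forall u, sl2 u -> h (g u) = u) /\ (forall u, sl2 u -> g (h u) = u).

(* G: subgroup of Aut(sl_2) generated by exp(ad xs), exp(ad ys), exp(ad zs)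
   (maps are considered through their action on sl_2). *)
Inductive Ggen : mapT -> Prop :=
  | Ggen_id : Ggen id
  | Ggen_x : Ggen (exp_ad xs)
  | Ggen_y : Ggen (exp_ad ys)
  | Ggen_z : Ggen (exp_ad zs)
  | Ggen_comp g h : Ggen g -> Ggen h -> Ggen (g \o h)
  | Ggen_inv g h : Ggen g -> inverse_on_sl2 g h -> Ggen h.

Definition lin_bij_sl2 (phi : 'M[F]_2 -> 'M[F]_2) : Prop :=
  (forall u, sl2 u -> sl2 (phi u)) /\
  (forall (a : F) u v, sl2 u -> sl2 v -> phi (a *: u + v) = a *: phi u + phi v) /\
  (forall u v, sl2 u -> sl2 v -> phi u = phi v -> u = v) /\
  (forall v, sl2 v -> exists2 u, sl2 u & phi u = v).

Definition is_aut (phi : 'M[F]_2 -> 'M[F]_2) : Prop :=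
  lin_bij_sl2 phi /\
  forall u v, sl2 u -> sl2 v -> phi (lie u v) = lie (phi u) (phi v).

Definition is_antiaut (phi : 'M[F]_2 -> 'M[F]_2) : Prop :=
  lin_bij_sl2 phi /\
  forall u v, sl2 u -> sl2 v -> phi (lie u v) = lie (phi v) (phi u).

Definition is_isom (phi : 'M[F]_2 -> 'M[F]_2) : Prop :=
  lin_bij_sl2 phi /\
  forall u v, sl2 u -> sl2 v -> \tr (phi u * phi v) = \tr (u * v).

Definition preserves_Lstar (phi : 'M[F]_2 -> 'M[F]_2) : Prop :=
  (forall u, Lstar u -> Lstar (phi u)) /\
  (forall v, Lstar v -> exists2 u, Lstar u & phi u = v).

Definition AutZ phi := is_aut phi /\ preserves_Lstar phi.
Definition AAutZ phi := (is_aut phi \/ is_antiaut phi) /\ preserves_Lstar phi.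
Definition IsomZ phi := is_isom phi /\ preserves_Lstar phi.

Definition orbit_zs (S : ('M[F]_2 -> 'M[F]_2) -> Prop) (u : 'M[F]_2) : Prop :=
  exists2 phi, S phi & phi zs = u.

End SL2.

(* For M = [[a,b],[c,d]] let
   conjM M u = det M * (M u adj M); when (det M)^2 = 1 this is u |-> M u M^-1,
   a Lie automorphism and an isometry of sl_2 that maps
   L* = {Mz p q r = [[p,q],[r,-p]] : p, q, r in Z} onto itself if M is integral.

   (1) Since (ad a)^3 = 0 for a = x*, y*, z*, the generators exp(ad a) of G are
       conjugations by integral matrices of determinant 1; hence so is every
       element of G, and G.z* consists of the matrices [[ac,-a^2],[c^2,-ac]]
       with ad - bc = 1.  The signs of the off-diagonal entries separate
       G.z* from -G.z*.
   (2) Conversely, an (anti)automorphism or isometry phi preserving L* maps z*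
       to a primitive vector Mz p q r of L* with square zero (p^2 + qr = 0):
       primitivity because phi is a bijection of L*, square zero because
       ad applied to phi z* is nilpotent, resp. because the square of phi z*
       has the same trace as the square of z*, namely 0.
   (3) A descent on r - q with the conjugations by [[1,1],[0,1]], [[1,0],[1,1]]
       and [[0,-1],[1,0]] shows that every primitive square-zero Mz p q r with
       q <= 0 <= r lies in G.z*; if instead q >= 0 >= r, its negative does.
   Together with the fact that G.z* and -G.z* consist of unimodular
   conjugates of z*, these inclusions close the cycle of equalities. *)

From HB Require Import structures.
From mathcomp Require Import all_boot all_order all_algebra.
From mathcomp Require Import ring zify.
Set Implicit Arguments. Unset Strict Implicit. Unset Printing Implicit Defensive.
Import GRing.Theory Num.Theory.
Local Open Scope ring_scope.

Section TwoByTwo.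
Variable F : fieldType.
Local Notation mx2 := (@mx2 F).

Lemma mx2_eta (u : 'M[F]_2) : u = mx2 (u 0 0) (u 0 1) (u 1 0) (u 1 1).
Proof.
apply/matrixP => i j; rewrite mxE.
by case: i => [[|[|i]] ?]; case: j => [[|[|j]] ?] //=; congr (u _ _); apply: val_inj.
Qed.

Lemma mx2_inj a b c d a' b' c' d' :
  mx2 a b c d = mx2 a' b' c' d' -> [/\ a = a', b = b', c = c' & d = d'].
Proof.
move=> E; have entry i j := congr1 (fun m : 'M[F]_2 => m i j) E.
by move: (entry 0 0) (entry 0 1) (entry 1 0) (entry 1 1); rewrite !mxE.
Qed.

Lemma mx2_mul a b c d a' b' c' d' :
  mx2 a b c d * mx2 a' b' c' d' =
  mx2 (a * a' + b * c') (a * b' + b * d') (c * a' + d * c') (c * b' + d * d').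
Proof.
apply/matrixP => i j; rewrite -mulmxE !mxE !big_ord_recl big_ord0 !mxE /=.
by case: i => [[|[|i]] ?]; case: j => [[|[|j]] ?] //=; rewrite addr0.
Qed.

Lemma mx2_add a b c d a' b' c' d' :
  mx2 a b c d + mx2 a' b' c' d' = mx2 (a + a') (b + b') (c + c') (d + d').
Proof. by apply/matrixP => i j; rewrite !mxE; case: ifP; case: ifP. Qed.

Lemma mx2_opp a b c d : - mx2 a b c d = mx2 (- a) (- b) (- c) (- d).
Proof. by apply/matrixP => i j; rewrite !mxE; case: ifP; case: ifP. Qed.

Lemma mx2_scale k a b c d : k *: mx2 a b c d = mx2 (k * a) (k * b) (k * c) (k * d).
Proof. by apply/matrixP => i j; rewrite !mxE; case: ifP; case: ifP. Qed.

Lemma mx2_tr a b c d : \tr (mx2 a b c d) = a + d.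
Proof. by rewrite /mxtrace !big_ord_recl big_ord0 !mxE /= addr0. Qed.

Lemma mx2_0 : 0 = mx2 0 0 0 0.
Proof. by apply/matrixP => i j; rewrite !mxE; case: ifP; case: ifP. Qed.

End TwoByTwo.

Ltac mx2_norm := rewrite ?(mx2_mul, mx2_add, mx2_opp, mx2_scale, mx2_tr).
Ltac mx2_ring := mx2_norm; congr mx2; ring.

Section Conjugation.
Variable F : fieldType.
Local Notation mx2 := (@mx2 F).
Implicit Types (a b c d k : F) (u v : 'M[F]_2).

(* Conjugation by [[a,b],[c,d]], scaled by the determinant so that it is a
   polynomial map: (det M) M u adj(M) = (det M)^2 M u M^-1. *)
Definition conjM a b c d u : 'M[F]_2 :=
  (a * d - b * c) *: (mx2 a b c d * u * mx2 d (- b) (- c) a).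

Lemma conjM_comp a b c d a' b' c' d' u :
  conjM a b c d (conjM a' b' c' d' u) =
  conjM (a * a' + b * c') (a * b' + b * d') (c * a' + d * c') (c * b' + d * d') u.
Proof. by rewrite [u]mx2_eta /conjM; mx2_ring. Qed.

Lemma conjM_invl a b c d u :
  conjM d (- b) (- c) a (conjM a b c d u) = ((a * d - b * c) ^+ 2) ^+ 2 *: u.
Proof. by rewrite [u]mx2_eta /conjM; mx2_ring. Qed.

Lemma conjM_invr a b c d u :
  conjM a b c d (conjM d (- b) (- c) a u) = ((a * d - b * c) ^+ 2) ^+ 2 *: u.
Proof. by rewrite [u]mx2_eta /conjM; mx2_ring. Qed.

Lemma conjM_linear a b c d k u v :
  conjM a b c d (k *: u + v) = k *: conjM a b c d u + conjM a b c d v.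
Proof. by rewrite [u]mx2_eta [v]mx2_eta /conjM; mx2_ring. Qed.

Lemma conjM_tr a b c d u : \tr (conjM a b c d u) = (a * d - b * c) ^+ 2 * \tr u.
Proof. by rewrite [u]mx2_eta /conjM; mx2_norm; ring. Qed.

Lemma conjM_lie a b c d u v :
  lie (conjM a b c d u) (conjM a b c d v) = (a * d - b * c) ^+ 2 *: conjM a b c d (lie u v).
Proof. by rewrite [u]mx2_eta [v]mx2_eta /conjM /lie; mx2_ring. Qed.

Lemma conjM_trace_form a b c d u v :
  \tr (conjM a b c d u * conjM a b c d v) = ((a * d - b * c) ^+ 2) ^+ 2 * \tr (u * v).
Proof. by rewrite [u]mx2_eta [v]mx2_eta /conjM; mx2_norm; ring. Qed.

End Conjugation.

Section IntegralConjugation.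
Variable F : fieldType.
Local Notation mx2 := (@mx2 F).
Local Notation xs := (@xs F).
Local Notation ys := (@ys F).
Local Notation zs := (@zs F).
Implicit Types (a b c d p q r : int) (u v : 'M[F]_2).

Definition conjZ a b c d : 'M[F]_2 -> 'M[F]_2 := conjM a%:~R b%:~R c%:~R d%:~R.

Definition unimodular a b c d := (a * d - b * c) ^+ 2 = 1.

Definition Mz p q r : 'M[F]_2 := mx2 p%:~R q%:~R r%:~R (- p%:~R).

Lemma LstarE u : Lstar u <-> exists p q r, u = Mz p q r.
Proof.
split=> [[a [b [c ->]]]|[p [q [r ->]]]].
  by exists a, (- a - c), (a + b); rewrite /xs /ys /zs /Mz; mx2_ring.
by exists p, (r - p), (- p - q); rewrite /xs /ys /zs /Mz; mx2_ring.
Qed.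

Lemma Lstar_Mz p q r : Lstar (Mz p q r).
Proof. by apply/LstarE; exists p, q, r. Qed.

Lemma Lstar_sl2 u : Lstar u -> sl2 u.
Proof. by case/LstarE=> p [q [r ->]]; rewrite /sl2 /Mz mx2_tr subrr. Qed.

Lemma zs_Mz : zs = Mz 0 (-1) 0.
Proof. by rewrite /zs /Mz; mx2_ring. Qed.

Lemma Lstar_zs : Lstar zs.
Proof. by rewrite zs_Mz; apply: Lstar_Mz. Qed.

Lemma sl2_zs : sl2 zs.
Proof. by rewrite /sl2 /zs mx2_tr addr0. Qed.

Lemma Mz_opp p q r : - Mz p q r = Mz (- p) (- q) (- r).
Proof. by rewrite /Mz; mx2_ring. Qed.

Lemma Mz_scale k p q r : k%:~R *: Mz p q r = Mz (k * p) (k * q) (k * r).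
Proof. by rewrite /Mz; mx2_ring. Qed.

Lemma conjZ_Mz a b c d p q r : conjZ a b c d (Mz p q r) =
  Mz ((a * d - b * c) * (p * (a * d + b * c) + b * d * r - a * c * q))
     ((a * d - b * c) * (a * a * q - b * b * r - 2 * a * b * p))
     ((a * d - b * c) * (2 * c * d * p + d * d * r - c * c * q)).
Proof. by rewrite /conjZ /conjM /Mz; mx2_ring. Qed.

Lemma conjZ_zs a b c d : conjZ a b c d zs =
  Mz ((a * d - b * c) * (a * c)) (- ((a * d - b * c) * (a * a))) ((a * d - b * c) * (c * c)).
Proof. by rewrite zs_Mz conjZ_Mz; congr Mz; ring. Qed.

Lemma conjZ_id u : conjZ 1 0 0 1 u = u.
Proof. by rewrite [u]mx2_eta /conjZ /conjM; mx2_ring. Qed.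

Lemma conjZ_comp a b c d a' b' c' d' u :
  conjZ a b c d (conjZ a' b' c' d' u) =
  conjZ (a * a' + b * c') (a * b' + b * d') (c * a' + d * c') (c * b' + d * d') u.
Proof. by rewrite /conjZ conjM_comp !intrD !intrM. Qed.

Lemma conjZ_sl2 a b c d u : sl2 u -> sl2 (conjZ a b c d u).
Proof. by rewrite /sl2 conjM_tr => ->; rewrite mulr0. Qed.

Lemma conjZ_Lstar a b c d u : Lstar u -> Lstar (conjZ a b c d u).
Proof. by case/LstarE=> p [q [r ->]]; rewrite conjZ_Mz; apply: Lstar_Mz. Qed.

Section Unimodular.
Variables a b c d : int.
Hypothesis unimod : unimodular a b c d.

Lemma unimodular_det : (a%:~R * d%:~R - b%:~R * c%:~R : F) ^+ 2 = 1.
Proof.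
by move/(congr1 (fun z : int => z%:~R : F)): unimod; rewrite rmorphXn rmorphB /= !rmorphM.
Qed.

Lemma conjZ_invl u : conjZ d (- b) (- c) a (conjZ a b c d u) = u.
Proof. by rewrite /conjZ !intrN conjM_invl unimodular_det expr1n scale1r. Qed.

Lemma conjZ_invr u : conjZ a b c d (conjZ d (- b) (- c) a u) = u.
Proof. by rewrite /conjZ !intrN conjM_invr unimodular_det expr1n scale1r. Qed.

Lemma conjZ_lin_bij : lin_bij_sl2 (conjZ a b c d).
Proof.
split; first exact: conjZ_sl2.
split; first by move=> k u v _ _; apply: conjM_linear.
split; first by move=> u v _ _ E; rewrite -(conjZ_invl u) E conjZ_invl.
by move=> v sl2v; exists (conjZ d (- b) (- c) a v); [apply: conjZ_sl2 | apply: conjZ_invr].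
Qed.

Lemma conjZ_AutZ : AutZ (conjZ a b c d).
Proof.
split; first split; first exact: conjZ_lin_bij.
  by move=> u v _ _; rewrite /conjZ conjM_lie unimodular_det scale1r.
split; first exact: conjZ_Lstar.
by move=> v Lv; exists (conjZ d (- b) (- c) a v); [apply: conjZ_Lstar | apply: conjZ_invr].
Qed.

Lemma conjZ_IsomZ : IsomZ (conjZ a b c d).
Proof.
split; last exact: conjZ_AutZ.2.
split; first exact: conjZ_lin_bij.
by move=> u v _ _; rewrite /conjZ conjM_trace_form unimodular_det expr1n mul1r.
Qed.

End Unimodular.
End IntegralConjugation.

(* G acts on sl_2 through SL_2(Z); this needs 2 to be invertible, to make
   sense of exp(ad a) = 1 + ad a + (ad a)^2 / 2. *)
Section Generators.
Variable F : fieldType.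
Hypothesis two_neq0 : (2%:R : F) != 0.
Local Notation xs := (@xs F).
Local Notation ys := (@ys F).
Local Notation zs := (@zs F).
Local Notation conjZ := (@conjZ F).
Local Notation Mz := (@Mz F).
Local Notation Orb := (orbit_zs (@Ggen F)).
Implicit Types (a b c d p q r : int) (u : 'M[F]_2).

(* For a square-zero matrix m, (ad m)^2 u = -2 m u m. *)
Lemma exp_ad_sq0 (m : 'M[F]_2) u : m * m = 0 -> exp_ad m u = u + lie m u - m * u * m.
Proof.
move=> m2; rewrite /exp_ad !big_ord_recl big_ord0 /= addr0 invr1 !scale1r /ad.
have -> : lie m (lie m u) = 2%:R *: - (m * u * m).
  rewrite /lie mulrBr mulrBl !mulrA m2 mul0r -(mulrA u) m2 mulr0 subr0 sub0r.
  by rewrite scaler_nat mulr2n.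
have -> : (bump 0 (bump 0 0))`! = 2%N by [].
by rewrite scalerA mulVf // scale1r addrA.
Qed.

Lemma exp_ad_xs u : exp_ad xs u = conjZ 2 (-1) 1 0 u.
Proof.
rewrite exp_ad_sq0; last by rewrite /xs mx2_0; mx2_ring.
by rewrite [u]mx2_eta /xs /lie /conjZ /conjM; mx2_ring.
Qed.

Lemma exp_ad_ys u : exp_ad ys u = conjZ 1 0 1 1 u.
Proof.
rewrite exp_ad_sq0; last by rewrite /ys mx2_0; mx2_ring.
by rewrite [u]mx2_eta /ys /lie /conjZ /conjM; mx2_ring.
Qed.

Lemma exp_ad_zs u : exp_ad zs u = conjZ 1 (-1) 0 1 u.
Proof.
rewrite exp_ad_sq0; last by rewrite /zs mx2_0; mx2_ring.
by rewrite [u]mx2_eta /zs /lie /conjZ /conjM; mx2_ring.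
Qed.

Lemma Ggen_conjZ (f : 'M[F]_2 -> 'M[F]_2) : Ggen f ->
  exists a b c d, a * d - b * c = 1 /\ forall u, sl2 u -> f u = conjZ a b c d u.
Proof.
elim=> [||||g1 g2 _ [a [b [c [d [det1 E1]]]]] _ [a' [b' [c' [d' [det2 E2]]]]]
        |g h _ [a [b [c [d [det1 E]]]]] [sl2h [hg gh]]].
- by exists 1, 0, 0, 1; split=> // u _; rewrite conjZ_id.
- by exists 2, (-1), 1, 0; split=> // u _; rewrite exp_ad_xs.
- by exists 1, 0, 1, 1; split=> // u _; rewrite exp_ad_ys.
- by exists 1, (-1), 0, 1; split=> // u _; rewrite exp_ad_zs.
- exists (a * a' + b * c'), (a * b' + b * d'), (c * a' + d * c'), (c * b' + d * d').
  split=> [|u sl2u /=]; last by rewrite E2 // E1 ?conjZ_comp //; apply: conjZ_sl2.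
  by transitivity ((a * d - b * c) * (a' * d' - b' * c')); [ring | rewrite det1 det2 mulr1].
- have unimod : unimodular a b c d by rewrite /unimodular det1 expr1n.
  exists d, (- b), (- c), a; split=> [|u sl2u]; first by rewrite -det1 mulrNN mulrC (mulrC b).
  by rewrite -[h u](conjZ_invl unimod) -E ?gh //; apply: sl2h.
Qed.

Lemma Ggen_conjZ_inv f a b c d : a * d - b * c = 1 -> Ggen f ->
  (forall u, sl2 u -> f u = conjZ a b c d u) -> Ggen (conjZ d (- b) (- c) a).
Proof.
move=> det1 Gf E; have unimod : unimodular a b c d by rewrite /unimodular det1 expr1n.
apply: (Ggen_inv Gf); split; first by move=> u; apply: conjZ_sl2.
split=> u sl2u; first by rewrite E ?conjZ_invl.
by rewrite E ?conjZ_invr //; apply: conjZ_sl2.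
Qed.

Lemma Ggen_conjZ_ext f a b c d : a * d - b * c = 1 -> Ggen f ->
  (forall u, sl2 u -> f u = conjZ a b c d u) -> Ggen (conjZ a b c d).
Proof.
move=> det1 Gf E; have det1' : d * a - (- b) * (- c) = 1 by rewrite -det1; ring.
by have := Ggen_conjZ_inv det1' (Ggen_conjZ_inv det1 Gf E) (fun _ _ => erefl); rewrite !opprK.
Qed.

Lemma Ggen_ys : Ggen (conjZ 1 0 1 1).
Proof. by apply: (Ggen_conjZ_ext _ (@Ggen_y F)) => // u _; apply: exp_ad_ys. Qed.

Lemma Ggen_zs_inv : Ggen (conjZ 1 1 0 1).
Proof. exact: (Ggen_conjZ_inv _ (@Ggen_z F) (fun u _ => exp_ad_zs u)). Qed.

Lemma Ggen_swap : Ggen (conjZ 0 (-1) 1 0).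
Proof.
apply: (Ggen_conjZ_ext _ (Ggen_comp (@Ggen_z F) (Ggen_comp (@Ggen_y F) (@Ggen_z F)))) => // u _.
by rewrite /= exp_ad_zs exp_ad_ys exp_ad_zs !conjZ_comp.
Qed.

Lemma orbit_zs_Mz : Orb (Mz 0 (-1) 0).
Proof. by exists id; [apply: Ggen_id | rewrite zs_Mz]. Qed.

Lemma orbit_conjZ a b c d u : Ggen (conjZ a b c d) -> Orb u -> Orb (conjZ a b c d u).
Proof. by move=> Gc [f Gf <-]; exists (conjZ a b c d \o f); first apply: Ggen_comp. Qed.

Lemma orbit_swap p q r : Orb (Mz p q r) -> Orb (Mz (- p) (- r) (- q)).
Proof.
have -> : Mz (- p) (- r) (- q) = conjZ 0 (-1) 1 0 (Mz p q r) by rewrite conjZ_Mz; congr Mz; ring.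
exact: orbit_conjZ Ggen_swap.
Qed.

Lemma orbitG_zs u : Orb u -> exists a b c d, a * d - b * c = 1 /\ u = conjZ a b c d zs.
Proof.
case=> f /Ggen_conjZ [a [b [c [d [det1 E]]]]] <-.
by exists a, b, c, d; rewrite E //; apply: sl2_zs.
Qed.

(* G.z* and -G.z* consist of conjugates of z* by GL_2(Z): for -G.z*, change
   the sign of the second column of the matrix. *)
Lemma signed_orbit_conjZ u : Orb u \/ Orb (- u) ->
  exists a b c d, unimodular a b c d /\ conjZ a b c d zs = u.
Proof.
case=> /orbitG_zs [a [b [c [d [det1 E]]]]].
  by exists a, b, c, d; rewrite /unimodular det1 expr1n.
exists a, (- b), c, (- d); split.
  by rewrite /unimodular; transitivity ((a * d - b * c) ^+ 2); [ring | rewrite det1 expr1n].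
by rewrite -[u]opprK E !conjZ_zs Mz_opp; congr Mz; ring.
Qed.

Lemma AutZ_orbit_of_signed u : Orb u \/ Orb (- u) -> orbit_zs (@AutZ F) u.
Proof.
case/signed_orbit_conjZ=> [a [b [c [d [unimod <-]]]]].
by exists (conjZ a b c d); first exact: conjZ_AutZ.
Qed.

Lemma IsomZ_orbit_of_signed u : Orb u \/ Orb (- u) -> orbit_zs (@IsomZ F) u.
Proof.
case/signed_orbit_conjZ=> [a [b [c [d [unimod <-]]]]].
by exists (conjZ a b c d); first exact: conjZ_IsomZ.
Qed.

End Generators.

Definition primitive_vec (p q r : int) :=
  forall k : int, (k %| p)%Z -> (k %| q)%Z -> (k %| r)%Z -> (k %| 1)%Z.

Lemma primitive_vecW p q r p' q' r' : primitive_vec p q r ->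
  (forall k, (k %| p')%Z -> (k %| q')%Z -> (k %| r')%Z ->
     [/\ (k %| p)%Z, (k %| q)%Z & (k %| r)%Z]) ->
  primitive_vec p' q' r'.
Proof. by move=> prim sub k kp kq kr; have [] := sub k kp kq kr; apply: prim. Qed.

Section Descent.
Variable F : fieldType.
Hypothesis two_neq0 : (2%:R : F) != 0.
Local Notation Mz := (@Mz F).
Local Notation conjZ := (@conjZ F).
Local Notation Orb := (orbit_zs (@Ggen F)).
Implicit Types (p q r : int).

(* Base case: on the axes q = 0 or r = 0 the vector is y* or z*. *)
Lemma orbit_axis p q r : q <= 0 -> 0 <= r -> p * p + q * r = 0 ->
  primitive_vec p q r -> q = 0 \/ r = 0 -> Orb (Mz p q r).
Proof.
move=> q_le0 r_ge0 iso prim [q0|r0]; have p0 : p = 0 by nia.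
- have : (r %| 1)%Z by apply: prim; rewrite ?p0 ?q0 ?dvdz0 ?dvdzz.
  rewrite dvdz1 p0 q0 => r1; have -> : r = 1 by lia.
  exact: (orbit_swap two_neq0 (orbit_zs_Mz F)).
- have : (q %| 1)%Z by apply: prim; rewrite ?p0 ?r0 ?dvdz0 ?dvdzz.
  rewrite dvdz1 p0 r0 => q1; have -> : q = -1 by lia.
  exact: orbit_zs_Mz.
Qed.

(* Induction step for p > 0: if r <= -q then r <= p, and the preimage under
   [[1,1],[0,1]] has measure r - q - (2p - r); otherwise -q <= p, and the
   preimage under [[1,0],[1,1]] has measure r - q - (2p + q).  Both are smaller,
   and the sign conditions are kept because r (-q') and (-q) r' are squares. *)
Lemma descent_step n p q r :
  (forall p q r, r - q <= n%:Z -> q <= 0 -> 0 <= r -> p * p + q * r = 0 ->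
     primitive_vec p q r -> Orb (Mz p q r)) ->
  r - q <= n.+1%:Z -> 0 < p -> q < 0 -> 0 < r -> p * p + q * r = 0 ->
  primitive_vec p q r -> Orb (Mz p q r).
Proof.
move=> IH le_m p_gt0 q_lt0 r_gt0 iso prim.
have [r_le|q_le] := lerP r (- q).
- have -> : Mz p q r = conjZ 1 1 0 1 (Mz (p - r) (q + 2 * p - r) r)
    by rewrite conjZ_Mz; congr Mz; ring.
  apply: orbit_conjZ (Ggen_zs_inv two_neq0) _; apply: IH; try nia.
  apply: (primitive_vecW prim) => k kp kq kr; split=> //.
    have -> : p = (p - r) + r by ring.
    by rewrite rpredD.
  have -> : q = (q + 2 * p - r) - 2 * (p - r) - r by ring.
  by apply: rpredB; [apply: rpredB; [|apply: dvdz_mull]|].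
- have -> : Mz p q r = conjZ 1 0 1 1 (Mz (p + q) q (r - 2 * p - q))
    by rewrite conjZ_Mz; congr Mz; ring.
  apply: orbit_conjZ (Ggen_ys two_neq0) _; apply: IH; try nia.
  apply: (primitive_vecW prim) => k kp kq kr; split=> //.
    have -> : p = (p + q) - q by ring.
    by rewrite rpredB.
  have -> : r = (r - 2 * p - q) + 2 * (p + q) - q by ring.
  by apply: rpredB; [apply: rpredD; [|apply: dvdz_mull]|].
Qed.

(* Induction on a bound n for r - q; the case p < 0 reduces to p > 0 by the
   symmetry (p, q, r) |-> (-p, -r, -q). *)
Lemma descent n p q r : r - q <= n%:Z -> q <= 0 -> 0 <= r ->
  p * p + q * r = 0 -> primitive_vec p q r -> Orb (Mz p q r).
Proof.
elim: n p q r => [|n IH] p q r le_m q_le0 r_ge0 iso prim.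
  by apply: orbit_axis => //; lia.
have [axis|/negP off_axis] := boolP ((q == 0) || (r == 0)).
  by apply: orbit_axis => //; case/orP: axis => /eqP; [left|right].
have [p_gt0|p_le0] := ltrP 0 p; first by apply: (descent_step IH) => //; lia.
have := @orbit_swap F two_neq0 (- p) (- r) (- q); rewrite !opprK; apply.
apply: (descent_step IH); try nia.
apply: (primitive_vecW prim) => k kp kq kr.
by split; rewrite -rpredN.
Qed.

Lemma orbit_primitive_isotropic p q r : p * p + q * r = 0 -> primitive_vec p q r ->
  Orb (Mz p q r) \/ Orb (- Mz p q r).
Proof.
move=> iso prim.
have [[q_le0 r_ge0]|[q_ge0 r_le0]] : (q <= 0 /\ 0 <= r) \/ (0 <= q /\ r <= 0) by nia.
  by left; apply: (descent (n := `|r - q|%N)) => //; lia.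
right; rewrite Mz_opp; apply: (descent (n := `|q - r|%N)); try nia.
apply: (primitive_vecW prim) => k kp kq kr.
by split; rewrite -rpredN.
Qed.

End Descent.

(* Criteria for an element u = [[P,Q],[R,-P]] of sl_2 to square to zero,
   i.e. to satisfy P^2 + QR = 0 (Cayley-Hamilton: u^2 = (P^2 + QR) 1). *)
Section SquareZero.
Variable F : fieldType.
Hypothesis two_neq0 : (2%:R : F) != 0.
Local Notation mx2 := (@mx2 F).
Implicit Types (P Q R : F) (u v : 'M[F]_2).

Lemma sl2_mx2 u : sl2 u -> u = mx2 (u 0 0) (u 0 1) (u 1 0) (- u 0 0).
Proof.
rewrite /sl2 {1}[u]mx2_eta mx2_tr => /eqP; rewrite addrC addr_eq0 => /eqP u11.
by rewrite -u11 -mx2_eta.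
Qed.

Lemma mx2_sl2_sq P Q R :
  mx2 P Q R (- P) * mx2 P Q R (- P) = mx2 (P * P + Q * R) 0 0 (P * P + Q * R).
Proof. by mx2_ring. Qed.

Lemma two_mul_eq0 (x : F) : 2%:R * x = 0 -> x = 0.
Proof. by move/eqP; rewrite mulf_eq0 (negbTE two_neq0) => /eqP. Qed.

(* tr(u^2) = 2 (P^2 + QR). *)
Lemma sl2_sq0_of_trace u : sl2 u -> \tr (u * u) = 0 -> u * u = 0.
Proof.
move/sl2_mx2 => ->; move: (u 0 0) (u 0 1) (u 1 0) => P Q R.
rewrite mx2_sl2_sq mx2_tr => tr0; have /two_mul_eq0 -> : 2%:R * (P * P + Q * R) = 0.
  by rewrite -tr0; ring.
by rewrite mx2_0.
Qed.

(* (ad u)^3 = 4 (P^2 + QR) ad u; testing on diag(1,-1) and -y* shows that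
   (P^2 + QR) R = (P^2 + QR) P = 0, whence (P^2 + QR)^2 = 0. *)
Lemma sl2_sq0_of_ad_nilpotent u : sl2 u ->
  (forall v, sl2 v -> lie u (lie u (lie u v)) = 0) -> u * u = 0.
Proof.
move/sl2_mx2 => ->; move: (u 0 0) (u 0 1) (u 1 0) => P Q R.
set M := mx2 P Q R (- P); set d := P * P + Q * R => nil.
have ad_cube v : lie M (lie M (lie M v)) = (2%:R * 2%:R * d) *: lie M v.
  by rewrite [v]mx2_eta /lie /M /d; mx2_ring.
have test v a b x : sl2 v -> lie M v = mx2 a b (2%:R * x) (- a) -> d * x = 0.
  move=> sl2v lieMv; have := nil v sl2v; rewrite ad_cube lieMv mx2_scale mx2_0.
  by case/mx2_inj => _ _ e _; do 3 apply: two_mul_eq0; rewrite -e; ring.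
have dR : d * R = 0.
  apply: (test (mx2 1 0 0 (-1)) 0 (- (2%:R * Q))); first by rewrite /sl2 mx2_tr subrr.
  by rewrite /lie /M; mx2_ring.
have dP : d * P = 0.
  apply: (test (mx2 0 0 (-1) 0) (- Q) 0); first by rewrite /sl2 mx2_tr addr0.
  by rewrite /lie /M; mx2_ring.
have : d * d = 0.
  by transitivity (P * (d * P) + Q * (d * R)); [rewrite /d; ring | rewrite dP dR !mulr0 addr0].
move/eqP; rewrite mulf_eq0 orbb => /eqP d0.
by rewrite /M mx2_sl2_sq -/d d0 -mx2_0.
Qed.

End SquareZero.

Section LinearMaps.
Variable F : fieldType.
Local Notation zs := (@zs F).
Implicit Types (u v w : 'M[F]_2) (phi : 'M[F]_2 -> 'M[F]_2).

Lemma lin_bij_0 phi : lin_bij_sl2 phi -> phi 0 = 0.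
Proof.
case=> _ [lin _]; have sl2_0 : sl2 (0 : 'M[F]_2) by rewrite /sl2 mxtrace0.
by have := lin (-1) 0 0 sl2_0 sl2_0; rewrite !scaleN1r oppr0 addr0 addNr.
Qed.

Lemma lin_bij_scale phi (k : F) u : lin_bij_sl2 phi -> sl2 u -> phi (k *: u) = k *: phi u.
Proof.
move=> bij sl2u; have sl2_0 : sl2 (0 : 'M[F]_2) by rewrite /sl2 mxtrace0.
by have := bij.2.1 k u 0 sl2u sl2_0; rewrite (lin_bij_0 bij) !addr0.
Qed.

Lemma lie_sl2 u v : sl2 (lie u v).
Proof. by rewrite [u]mx2_eta [v]mx2_eta /sl2 /lie; mx2_norm; ring. Qed.

Lemma lieZr u (k : F) v : lie u (k *: v) = k *: lie u v.
Proof. by rewrite /lie -scalerAr -scalerAl scalerBr. Qed.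

Lemma ad_zs_cube w : lie zs (lie zs (lie zs w)) = 0.
Proof. by rewrite [w]mx2_eta /zs /lie mx2_0; mx2_ring. Qed.

Lemma lie_image_sign phi : is_aut phi \/ is_antiaut phi ->
  exists e : F, forall u v, sl2 u -> sl2 v -> lie (phi u) (phi v) = e *: phi (lie u v).
Proof.
case=> [[_ hom]|[_ antihom]]; first by exists 1 => u v su sv; rewrite hom // scale1r.
exists (-1) => u v su sv; rewrite antihom // scaleN1r.
by rewrite /lie opprB.
Qed.

(* Hence ad applied to phi z* is, up to sign, conjugate to ad z*, whose cube
   vanishes on sl_2. *)
Lemma ad_nilpotent_image phi : is_aut phi \/ is_antiaut phi ->
  forall v, sl2 v -> lie (phi zs) (lie (phi zs) (lie (phi zs) v)) = 0.
Proof.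
move=> hom v sl2v; have bij : lin_bij_sl2 phi by case: hom => -[].
have [e lieE] := lie_image_sign hom; have [w sl2w <-] := bij.2.2.2 v sl2v.
have s1 := lie_sl2 zs w; have s2 := lie_sl2 zs (lie zs w); have s0 := sl2_zs F.
rewrite lieE // !lieZr [lie _ (phi (lie _ _))]lieE // !lieZr [lie _ (phi (lie _ _))]lieE //.
by rewrite ad_zs_cube (lin_bij_0 bij) !scaler0.
Qed.

End LinearMaps.

(* In characteristic 0 the integer coordinates of L* are determined by the
   matrix, which yields disjointness and the invariants of phi z*. *)
Section CharacteristicZero.
Variable F : fieldType.
Hypothesis charF0 : [pchar F] =i pred0.
Local Notation zs := (@zs F).
Local Notation Mz := (@Mz F).
Local Notation conjZ := (@conjZ F).
Local Notation Orb := (orbit_zs (@Ggen F)).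
Implicit Types (p q r : int) (u : 'M[F]_2) (phi : 'M[F]_2 -> 'M[F]_2).

Lemma pchar0_two_neq0 : (2%:R : F) != 0.
Proof. by rewrite ((pcharf0P F).1 charF0). Qed.

Lemma intr_eq0_pchar0 (k : int) : (k%:~R : F) = 0 -> k = 0.
Proof.
have natF := (pcharf0P F).1 charF0.
case: k => n; first by rewrite -pmulrn => /eqP; rewrite natF => /eqP ->.
by rewrite NegzE intrN -pmulrn => /eqP; rewrite oppr_eq0 natF.
Qed.

Lemma intr_inj_pchar0 (m n : int) : (m%:~R : F) = n%:~R -> m = n.
Proof.
move=> E; apply/eqP; rewrite -subr_eq0; apply/eqP; apply: intr_eq0_pchar0.
by rewrite intrB E subrr.
Qed.

Lemma Mz_inj p q r p' q' r' : Mz p q r = Mz p' q' r' -> [/\ p = p', q = q' & r = r'].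
Proof. by case/mx2_inj => /intr_inj_pchar0 -> /intr_inj_pchar0 -> /intr_inj_pchar0 ->. Qed.

Lemma Mz_isotropic p q r : Mz p q r * Mz p q r = 0 -> p * p + q * r = 0.
Proof.
rewrite /Mz mx2_sl2_sq mx2_0 => /mx2_inj [e _ _ _]; apply: intr_eq0_pchar0.
by rewrite -e; ring.
Qed.

(* Part (i): u = [[ac,-a^2],[c^2,-ac]] and -u = [[a'c',-a'^2],[c'^2,-a'c']]
   force a = c = 0, contradicting ad - bc = 1. *)
Lemma orbitG_zs_disjoint u : ~ (Orb u /\ Orb (- u)).
Proof.
case=> /(orbitG_zs pchar0_two_neq0) [a [b [c [d [det1 ->]]]]].
case/(orbitG_zs pchar0_two_neq0) => [a' [b' [c' [d' [det1' E]]]]].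
move: E; rewrite !conjZ_zs det1 det1' Mz_opp => /Mz_inj [_ ea ec].
nia.
Qed.

(* phi z* = Mz p q r is primitive: if k divides p, q, r then phi (k w) = phi z*
   for some w in L*, so k w = z* and k divides -1. *)
Lemma image_zs_primitive phi p q r : lin_bij_sl2 phi -> preserves_Lstar phi ->
  phi zs = Mz p q r -> primitive_vec p q r.
Proof.
move=> bij [_ onto] Ezs k kp kq kr.
have [w Lw Ew] := onto _ (@Lstar_Mz F (p %/ k)%Z (q %/ k)%Z (r %/ k)%Z).
have kw : k%:~R *: w = zs.
  apply: bij.2.2.1; [by rewrite /sl2 mxtraceZ (Lstar_sl2 Lw) mulr0 | exact: sl2_zs |].
  rewrite (lin_bij_scale _ bij (Lstar_sl2 Lw)) Ew Ezs Mz_scale.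
  by congr Mz; rewrite mulrC divzK.
have [p' [q' [r' Ew']]] := (LstarE w).1 Lw.
move: kw; rewrite Ew' Mz_scale zs_Mz => /Mz_inj [_ kq' _].
by rewrite -rpredN -kq' dvdz_mulr.
Qed.

Lemma orbit_of_image phi : lin_bij_sl2 phi -> preserves_Lstar phi ->
  phi zs * phi zs = 0 -> Orb (phi zs) \/ Orb (- phi zs).
Proof.
move=> bij pres; have [p [q [r Ezs]]] := (LstarE _).1 (pres.1 _ (Lstar_zs F)).
rewrite Ezs => /Mz_isotropic iso.
apply: (orbit_primitive_isotropic pchar0_two_neq0 iso).
exact: image_zs_primitive bij pres Ezs.
Qed.

Lemma signed_of_AAutZ_orbit u : orbit_zs (@AAutZ F) u -> Orb u \/ Orb (- u).
Proof.
case=> phi [hom pres] <-; have bij : lin_bij_sl2 phi by case: hom => -[].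
apply: (orbit_of_image bij pres); apply: (sl2_sq0_of_ad_nilpotent pchar0_two_neq0).
  by apply: bij.1; apply: sl2_zs.
exact: ad_nilpotent_image.
Qed.

Lemma signed_of_IsomZ_orbit u : orbit_zs (@IsomZ F) u -> Orb u \/ Orb (- u).
Proof.
case=> phi [[bij isom] pres] <-; apply: (orbit_of_image bij pres).
apply: (sl2_sq0_of_trace pchar0_two_neq0); first by apply: bij.1; apply: sl2_zs.
rewrite isom; try exact: sl2_zs.
by rewrite /zs; mx2_norm; ring.
Qed.

End CharacteristicZero.

(* The signed orbit G.z* u -G.z* is contained in the Aut_Z- and Isom_Z-orbits
   of z*, the Aut_Z-orbit in the AAut_Z-orbit, and the AAut_Z- and Isom_Z-orbits
   in the signed orbit. *)
Theorem theorem6p10 (F : fieldType) (charF0 : [pchar F] =i pred0) :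
  (forall u : 'M[F]_2, ~ (orbit_zs (@Ggen F) u /\ orbit_zs (@Ggen F) (- u))) /\
  (forall u : 'M[F]_2,
     ((orbit_zs (@Ggen F) u \/ orbit_zs (@Ggen F) (- u)) <-> orbit_zs (@AutZ F) u) /\
     (orbit_zs (@AutZ F) u <-> orbit_zs (@AAutZ F) u) /\
     (orbit_zs (@AAutZ F) u <-> orbit_zs (@IsomZ F) u)).
Proof.
split=> [u|u]; first exact: orbitG_zs_disjoint.
have two_neq0 := pchar0_two_neq0 charF0.
have Aut_AAut : orbit_zs (@AutZ F) u -> orbit_zs (@AAutZ F) u.
  by case=> phi [aut pres] <-; exists phi => //; split => //; left.
have := AutZ_orbit_of_signed two_neq0 (u := u).
have := IsomZ_orbit_of_signed two_neq0 (u := u).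
have := signed_of_AAutZ_orbit charF0 (u := u).
have := signed_of_IsomZ_orbit charF0 (u := u).
tauto.
Qed.
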